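(* Let $X$ be sufficiently large. Suppose that $\delta \ge X^{-1/10}$ and $\theta\in\mathbb{R}$ satisfy $|\widehat{g_{X,\Box}}(\theta)| \ge \delta X$. Then there exists a natural number $q\ll (\log X)^2 \delta^{-4}$ such that \[\|q\theta\|_{\mathbb{R}/\mathbb{Z}}\ll (\log X)^2 \delta^{-4} X^{-1}.\] (Implied constants may depend on the fixed function $w$.)
   Context: Fix a smooth function $w:\mathbb{R}\to[0,1]$ supported on $[-1,1]$ with $w(x)\ge 1/2$ for $x\in[-1/2,1/2]$ and $|\widehat w(t)|\ll e^{-\sqrt{|t|}}$ for all $t\in\mathbb{R}$, where $\widehat w(t)=\int_{\mathbb R}w(x)e(-tx)\,dx$ and $e(s)=e^{2\pi i s}$. Define $g_{X,\Box}:\mathbb{Z}\to\mathbb{R}$ by $g_{X,\Box}(x)=t\,w(t^2/X)$ if $|x|=t^2$ with $t\in\mathbb{N}$, and $g_{X,\Box}(x)=0$ if $|x|$ is not a square. Let $\widehat{g_{X,\Box}}(\theta)=\sum_x g_{X,\Box}(x)e(-\theta x)$. $\|\cdot\|_{\mathbb R/\mathbb Z}$ is distance to the nearest integer. *)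

From Stdlib Require Import Reals ZArith Arith.
From Coquelicot Require Import Coquelicot.
Open Scope R_scope.

(* e(s) = exp(2 pi i s); all complex quantities are written through their
   real and imaginary parts. *)

(* Fourier transform of w (supported on [-1,1], so the integral over R is
   the integral over [-1,1]):  hat w(t) = int w(x) e(-tx) dx. *)
Definition what_re (w : R -> R) (t : R) : R :=
  RInt (fun x => w x * cos (2 * PI * t * x)) (-1) 1.
Definition what_im (w : R -> R) (t : R) : R :=
  - RInt (fun x => w x * sin (2 * PI * t * x)) (-1) 1.
Definition what_abs (w : R -> R) (t : R) : R :=
  sqrt (what_re w t ^ 2 + what_im w t ^ 2).

Definition g_box (w : R -> R) (X : R) (x : Z) : R :=
  let n := Z.abs_nat x in
  let t := Nat.sqrt n in
  if Nat.eqb (t * t) n then INR t * w (INR n / X) else 0.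

(* hat g(theta) = sum_x g(x) e(-theta x).  Since w vanishes outside [-1,1],
   g_{X,Box}(x) = 0 whenever |x| > X, so the sum over Z equals the finite sum
   over |x| <= N with N = Z.to_nat (up X) (> X). *)
Definition gN (X : R) : nat := Z.to_nat (up X).
Definition ghat_re (w : R -> R) (X theta : R) : R :=
  sum_f_R0 (fun k => let x := (Z.of_nat k - Z.of_nat (gN X))%Z in
                     g_box w X x * cos (2 * PI * theta * IZR x)) (2 * gN X).
Definition ghat_im (w : R -> R) (X theta : R) : R :=
  - sum_f_R0 (fun k => let x := (Z.of_nat k - Z.of_nat (gN X))%Z in
                       g_box w X x * sin (2 * PI * theta * IZR x)) (2 * gN X).
Definition ghat_abs (w : R -> R) (X theta : R) : R :=
  sqrt (ghat_re w X theta ^ 2 + ghat_im w X theta ^ 2).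

Definition distZ (r : R) : R :=
  Rmin (r - IZR (Int_part r)) (IZR (Int_part r) + 1 - r).

From Stdlib Require Import Reals Lra Lia ZArith Arith.
From Coquelicot Require Import Coquelicot.
Open Scope R_scope.

(* Since g_{X,Box} is even, hat g(theta) is the real sum of t w(t^2/X) cos(2 pi theta t^2).
   Abel summation against these slowly varying weights yields T << sqrt X with
   C(T) = sum_{t<T} cos(2 pi theta t^2) satisfying C(T)^2 >> delta^2 X.  Weyl differencing
   bounds C(T)^2 by T + 2 sum_d D_d, where D_d |sin(2 pi theta (d+1))| <= 1, and a dyadic
   pigeonhole finds a level 2^j such that >> delta^2 X / (2^j log X) shifts d have
   ||2 (d+1) theta|| << 2^-j.  A dense set of n <= T with n alpha all close to Z forces alpha
   close to a rational of small denominator q: two close elements give q, and counting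
   inside residue classes mod q sharpens ||q alpha||.  Then 2q works for theta. *)

(* rsum f n = f 0 + ... + f (n-1); Stdlib's sum_f_R0 f n has n+1 terms and no empty sum. *)
Fixpoint rsum (f : nat -> R) (n : nat) : R :=
  match n with O => 0 | S n' => rsum f n' + f n' end.

Lemma rsum_S f n : rsum f (S n) = rsum f n + f n.
Proof. reflexivity. Qed.

Lemma rsum_ext f g n : (forall i, (i < n)%nat -> f i = g i) -> rsum f n = rsum g n.
Proof.
  induction n as [|n IH]; intros H; simpl; auto.
  rewrite IH, H; auto; intros; apply H; lia.
Qed.

Lemma rsum_le f g n : (forall i, (i < n)%nat -> f i <= g i) -> rsum f n <= rsum g n.
Proof.
  induction n as [|n IH]; intros H; simpl; [lra|].
  apply Rplus_le_compat; [apply IH; intros; apply H|apply H]; lia.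
Qed.

Lemma rsum_add f g n : rsum (fun i => f i + g i) n = rsum f n + rsum g n.
Proof. induction n; simpl; lra. Qed.

Lemma rsum_scal c f n : rsum (fun i => c * f i) n = c * rsum f n.
Proof. induction n as [|n IH]; simpl; [ring|]. rewrite IH; ring. Qed.

Lemma rsum_const c n : rsum (fun _ => c) n = INR n * c.
Proof. induction n as [|n IH]; [simpl; ring|]. rewrite rsum_S, IH, S_INR; ring. Qed.

Lemma rsum_nonneg f n : (forall i, (i < n)%nat -> 0 <= f i) -> 0 <= rsum f n.
Proof.
  intros H. replace 0 with (rsum (fun _ => 0) n) by (rewrite rsum_const; ring).
  now apply rsum_le.
Qed.

Lemma rsum_abs f n : Rabs (rsum f n) <= rsum (fun i => Rabs (f i)) n.
Proof.
  induction n as [|n IH]; simpl; [rewrite Rabs_R0; lra|].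
  eapply Rle_trans; [apply Rabs_triang|]. lra.
Qed.

Lemma rsum_split f n m : rsum f (n + m) = rsum f n + rsum (fun i => f (n + i)%nat) m.
Proof.
  induction m as [|m IH]; simpl; [rewrite Nat.add_0_r; ring|].
  rewrite Nat.add_succ_r; simpl. rewrite IH; ring.
Qed.

Lemma rsum_shift f n : rsum f (S n) = f O + rsum (fun i => f (S i)) n.
Proof. replace (S n) with (1 + n)%nat by lia. rewrite rsum_split; simpl; ring. Qed.

Lemma rsum_rev f n : rsum f n = rsum (fun i => f (n - 1 - i)%nat) n.
Proof.
  induction n as [|n IH]; [reflexivity|].
  rewrite rsum_S, (rsum_shift (fun i => f (S n - 1 - i)%nat)), IH.
  replace (S n - 1 - 0)%nat with n by lia.
  rewrite (rsum_ext (fun i => f (S n - 1 - S i)%nat) (fun i => f (n - 1 - i)%nat)); [ring|].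
  intros; f_equal; lia.
Qed.

Lemma rsum_swap (F : nat -> nat -> R) n m :
  rsum (fun i => rsum (fun j => F i j) m) n = rsum (fun j => rsum (fun i => F i j) n) m.
Proof.
  induction n as [|n IH]; simpl.
  - rewrite rsum_const; ring.
  - rewrite IH, <- rsum_add. apply rsum_ext; reflexivity.
Qed.

Lemma rsum_mul f g n m : rsum f n * rsum g m = rsum (fun i => rsum (fun j => f i * g j) m) n.
Proof.
  rewrite Rmult_comm, <- rsum_scal. apply rsum_ext; intros i _.
  rewrite Rmult_comm, <- rsum_scal. apply rsum_ext; intros; ring.
Qed.

Lemma rsum_blocks f K W :
  rsum f (K * W) = rsum (fun k => rsum (fun i => f (k * W + i)%nat) W) K.
Proof.
  induction K as [|K IH]; simpl; auto.
  replace (W + K * W)%nat with (K * W + W)%nat by lia. rewrite rsum_split, IH; auto.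
Qed.

Lemma rsum_residues f K q :
  rsum f (K * q) = rsum (fun r => rsum (fun m => f (r + m * q)%nat) K) q.
Proof.
  rewrite rsum_blocks, rsum_swap. apply rsum_ext; intros; apply rsum_ext; intros.
  f_equal; lia.
Qed.

Lemma rsum_le_mono f n m : (forall i, 0 <= f i) -> (n <= m)%nat -> rsum f n <= rsum f m.
Proof.
  intros Hf Hnm. replace m with (n + (m - n))%nat by lia. rewrite rsum_split.
  assert (0 <= rsum (fun i => f (n + i)%nat) (m - n)) by (apply rsum_nonneg; auto). lra.
Qed.

Lemma rsum_telescope (F : nat -> R) m : rsum (fun s => F (S s) - F s) m = F m - F O.
Proof. induction m as [|m IH]; simpl; [ring|]. rewrite IH; ring. Qed.

Lemma sum_f_R0_rsum f n : sum_f_R0 f n = rsum f (S n).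
Proof. induction n as [|n IH]; simpl; [ring|]. simpl in IH. now rewrite IH. Qed.

Lemma rsum_exists_gt f n c : INR n * c < rsum f n -> exists i, (i < n)%nat /\ c < f i.
Proof.
  intros H. destruct (Classical_Prop.classic (exists i, (i < n)%nat /\ c < f i)) as [|Hno]; auto.
  assert (Hle : rsum f n <= rsum (fun _ => c) n).
  { apply rsum_le; intros i Hi. apply Rnot_lt_le; intros Hc. apply Hno; eauto. }
  rewrite rsum_const in Hle. lra.
Qed.

Lemma rsum_exists_ge f n c :
  (1 <= n)%nat -> INR n * c <= rsum f n -> exists i, (i < n)%nat /\ c <= f i.
Proof.
  intros Hn Hsum.
  destruct (Classical_Prop.classic (exists i, (i < n)%nat /\ c <= f i)) as [|Hno]; auto.
  destruct n as [|n]; [lia|].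
  assert (Hlt : forall i, (i < S n)%nat -> f i < c).
  { intros i Hi. apply Rnot_le_lt; intros Hc. apply Hno; eauto. }
  assert (rsum f n <= rsum (fun _ => c) n) by (apply rsum_le; intros; apply Rlt_le, Hlt; lia).
  pose proof (Hlt n (Nat.lt_succ_diag_r n)).
  rewrite rsum_S, <- rsum_const, rsum_S in Hsum. lra.
Qed.

Definition ind_le (a b : R) : R := if Rle_dec a b then 1 else 0.

Lemma ind_le_bounds a b : 0 <= ind_le a b <= 1.
Proof. unfold ind_le; destruct Rle_dec; lra. Qed.

Lemma ind_le_1 a b : a <= b -> ind_le a b = 1.
Proof. unfold ind_le; destruct Rle_dec; lra. Qed.

Lemma ind_le_pos a b : 0 < ind_le a b -> a <= b.
Proof. unfold ind_le; destruct Rle_dec; lra. Qed.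

Lemma count_interval x y n :
  rsum (fun i => ind_le x (INR i) * ind_le (INR i) y) n <= Rmax 0 (y + 1 - x).
Proof.
  enough (H : rsum (fun i => ind_le x (INR i) * ind_le (INR i) y) n
              <= Rmax 0 (Rmin (INR n) (y + 1) - x)).
  { eapply Rle_trans; [apply H|]. unfold Rmax, Rmin; repeat destruct Rle_dec; lra. }
  induction n as [|n IH]; simpl rsum.
  - simpl INR. unfold Rmax, Rmin; repeat destruct Rle_dec; lra.
  - rewrite S_INR. revert IH. unfold ind_le, Rmax, Rmin; repeat destruct Rle_dec; intros; lra.
Qed.

Definition zero_one (f : nat -> R) := forall i, f i = 0 \/ f i = 1.

Lemma zero_one_nonneg f : zero_one f -> forall i, 0 <= f i.
Proof. intros H i; destruct (H i); lra. Qed.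

Lemma zero_one_le_1 f : zero_one f -> forall i, f i <= 1.
Proof. intros H i; destruct (H i); lra. Qed.

Lemma zero_one_exists f n : zero_one f -> 0 < rsum f n -> exists i, (i < n)%nat /\ f i = 1.
Proof.
  intros H Hs. destruct (rsum_exists_gt f n 0) as [i [Hi Hf]]; [lra|].
  exists i; split; auto. destruct (H i); lra.
Qed.

Lemma zero_one_exists2 f n : zero_one f -> 1 < rsum f n ->
  exists i i', (i < i' < n)%nat /\ f i = 1 /\ f i' = 1.
Proof.
  intros H. induction n as [|n IH]; simpl rsum; intros Hs; [lra|].
  destruct (Rlt_le_dec 1 (rsum f n)) as [h|h].
  - destruct (IH h) as [i [i' [? ?]]]. exists i, i'. split; auto; lia.
  - destruct (H n) as [e|e]; [lra|].
    destruct (zero_one_exists f n H) as [i [Hi Hfi]]; [lra|].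
    exists i, n; repeat split; auto.
Qed.

Lemma zero_one_rsum_le f n : zero_one f -> rsum f n <= INR n.
Proof.
  intros H. rewrite <- (Rmult_1_r (INR n)), <- rsum_const.
  apply rsum_le; intros; apply zero_one_le_1; auto.
Qed.

Lemma rsum_le_windows f n W c : (forall i, 0 <= f i) -> (1 <= W)%nat ->
  (forall k, rsum (fun i => f (k * W + i)%nat) W <= c) ->
  rsum f n <= (INR n / INR W + 1) * c.
Proof.
  intros Hf HW Hc.
  assert (Hc0 : 0 <= c) by (eapply Rle_trans; [apply rsum_nonneg; auto|apply (Hc O)]).
  assert (HW' : 0 < INR W) by (apply lt_0_INR; lia).
  set (K := S (n / W)).
  assert (HK : (n <= K * W)%nat) by (pose proof (Nat.mul_succ_div_gt n W); unfold K; lia).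
  assert (HKW : INR K <= INR n / INR W + 1).
  { unfold K. rewrite S_INR. apply Rplus_le_compat_r.
    apply (Rmult_le_reg_r (INR W)); auto. field_simplify; [|lra].
    rewrite <- mult_INR. apply le_INR. rewrite Nat.mul_comm. apply Nat.Div0.mul_div_le. }
  eapply Rle_trans; [apply (rsum_le_mono f n (K * W)); auto|].
  rewrite rsum_blocks. eapply Rle_trans; [apply (rsum_le _ (fun _ => c)); intros; apply Hc|].
  rewrite rsum_const. apply Rmult_le_compat_r; auto.
Qed.

Definition nearZ (x e : R) := exists n : Z, Rabs (x - IZR n) <= e.

Lemma nearZ_sub x y e1 e2 : nearZ x e1 -> nearZ y e2 -> nearZ (x - y) (e1 + e2).
Proof.
  intros [n Hn] [m Hm]. exists (n - m)%Z. rewrite minus_IZR.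
  replace (x - y - (IZR n - IZR m)) with ((x - IZR n) - (y - IZR m)) by ring.
  eapply Rle_trans; [apply Rabs_triang|]. rewrite Rabs_Ropp. lra.
Qed.

Lemma nearZ_shift x k e : nearZ (x + IZR k) e -> nearZ x e.
Proof.
  intros [n Hn]. exists (n - k)%Z. rewrite minus_IZR.
  replace (x - (IZR n - IZR k)) with (x + IZR k - IZR n) by ring. auto.
Qed.

Lemma nearZ_small x e : Rabs x < 1/2 - e -> nearZ x e -> Rabs x <= e.
Proof.
  intros Hx [n Hn]. destruct (Z.eq_dec n 0) as [->|hn]; [now rewrite Rminus_0_r in Hn|].
  assert (1 <= Rabs (IZR n)) by (rewrite <- abs_IZR; apply IZR_le; lia).
  assert (Rabs (IZR n) <= Rabs x + Rabs (x - IZR n)).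
  { replace (IZR n) with (x - (x - IZR n)) at 1 by ring.
    eapply Rle_trans; [apply Rabs_triang|]. rewrite Rabs_Ropp; lra. }
  lra.
Qed.

Lemma distZ_le r a : distZ r <= Rabs (r - IZR a).
Proof.
  unfold distZ. destruct (base_Int_part r) as [h1 h2]. set (k := Int_part r) in *.
  destruct (Z_le_gt_dec a k) as [h|h].
  - apply IZR_le in h. rewrite Rabs_right by lra. eapply Rle_trans; [apply Rmin_l|]. lra.
  - assert (Ha : IZR (k + 1) <= IZR a) by (apply IZR_le; lia). rewrite plus_IZR in Ha.
    rewrite Rabs_left1 by lra. eapply Rle_trans; [apply Rmin_r|]. lra.
Qed.

Lemma nat_floor r : 0 <= r -> exists n : nat, INR n <= r < INR n + 1.
Proof.
  intros Hr. destruct (base_Int_part r) as [H1 H2].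
  assert (Hz : (0 <= Int_part r)%Z).
  { assert (Hlt : IZR (-1) < IZR (Int_part r)) by lra. apply lt_IZR in Hlt. lia. }
  exists (Z.to_nat (Int_part r)). rewrite INR_IZR_INZ, Z2Nat.id by auto. lra.
Qed.

Section Progression.

Variables (g : nat -> R) (beta eps : R).
Hypothesis g_zero_one : zero_one g.
Hypothesis eps_range : 0 < eps <= 1/16.
Hypothesis g_near : forall m m', g m = 1 -> g m' = 1 -> nearZ ((INR m' - INR m) * beta) (2 * eps).

(* On a window where |(m' - m) beta| stays below 1/4, nearness to Z forces
   |(m' - m) beta| <= 2 eps. *)
Lemma window_rsum_le W k : 0 < Rabs beta -> INR W * Rabs beta <= 1/4 ->
  rsum (fun i => g (k * W + i)%nat) W <= 4 * eps / Rabs beta + 1.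
Proof.
  intros Hb HW. set (A := 2 * eps / Rabs beta).
  assert (HA : 0 <= A) by (unfold A; apply Rdiv_le_0_compat; lra).
  destruct (Rle_lt_dec (rsum (fun i => g (k * W + i)%nat) W) 0) as [h|h].
  { apply Rle_trans with 0; [lra|]. apply Rlt_le, Rplus_le_lt_0_compat; [|lra].
    apply Rdiv_le_0_compat; lra. }
  destruct (zero_one_exists (fun i => g (k * W + i)%nat) W) as [i0 [Hi0 Hg0]]; auto.
  { intros j; apply g_zero_one. }
  eapply Rle_trans.
  - apply (rsum_le _ (fun i => ind_le (INR i0 - A) (INR i) * ind_le (INR i) (INR i0 + A))).
    intros i Hi. destruct (g_zero_one (k * W + i)%nat) as [e|e]; rewrite e.
    { apply Rmult_le_pos; apply ind_le_bounds. }
    pose proof (g_near _ _ Hg0 e) as Hn.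
    replace (INR (k * W + i) - INR (k * W + i0)) with (INR i - INR i0) in Hn
      by (rewrite !plus_INR; ring).
    assert (Hdist : Rabs (INR i - INR i0) < INR W).
    { apply Rabs_def1.
      - assert (INR i + 1 <= INR W) by (rewrite <- S_INR; apply le_INR; lia).
        pose proof (pos_INR i0); lra.
      - assert (INR i0 + 1 <= INR W) by (rewrite <- S_INR; apply le_INR; lia).
        pose proof (pos_INR i); lra. }
    assert (Hlt : Rabs ((INR i - INR i0) * beta) < 1/2 - 2 * eps).
    { rewrite Rabs_mult.
      assert (Rabs (INR i - INR i0) * Rabs beta < INR W * Rabs beta)
        by (apply Rmult_lt_compat_r; lra).
      lra. }
    pose proof (nearZ_small _ _ Hlt Hn) as Hs. rewrite Rabs_mult in Hs.
    assert (Hclose : Rabs (INR i - INR i0) <= A).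
    { unfold A. apply (Rmult_le_reg_r (Rabs beta)); auto. field_simplify; lra. }
    apply Rabs_le_between in Hclose. rewrite !ind_le_1; lra.
  - eapply Rle_trans; [apply count_interval|].
    replace (4 * eps / Rabs beta) with (2 * A) by (unfold A; field; lra).
    unfold Rmax; destruct Rle_dec; lra.
Qed.

Lemma progression_rsum_le K : 0 < Rabs beta <= 1/8 ->
  rsum g K <= (8 * Rabs beta * INR K + 1) * (4 * eps / Rabs beta + 1).
Proof.
  intros Hb. set (b := Rabs beta) in *.
  destruct (nat_floor (1 / (4 * b))) as [W HW]; [apply Rlt_le, Rdiv_lt_0_compat; lra|].
  assert (H4b : 2 <= 1 / (4 * b)) by (apply (Rmult_le_reg_r (4 * b)); [lra|field_simplify; lra]).
  assert (HW8 : 1 / (8 * b) <= INR W)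
    by (replace (1 / (8 * b)) with (1 / (4 * b) / 2) by (field; lra); lra).
  assert (HWpos : 0 < INR W) by (assert (0 < 1 / (8 * b)) by (apply Rdiv_lt_0_compat; lra); lra).
  assert (HWb : INR W * b <= 1/4).
  { apply (Rmult_le_reg_r (/ b)); [apply Rinv_0_lt_compat; lra|].
    replace (1/4 * / b) with (1 / (4 * b)) by (field; lra). field_simplify; lra. }
  assert (HKW : INR K / INR W <= 8 * b * INR K).
  { unfold Rdiv. rewrite (Rmult_comm (8 * b)). apply Rmult_le_compat_l; [apply pos_INR|].
    replace (8 * b) with (/ (1 / (8 * b))) by (field; lra).
    apply Rinv_le_contravar; auto. apply Rdiv_lt_0_compat; lra. }
  eapply Rle_trans.
  - apply rsum_le_windows with (W := W); [apply zero_one_nonneg; auto|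
      destruct W; [simpl in HWpos; lra|lia]|].
    intros k. apply window_rsum_le; unfold b in *; lra.
  - apply Rmult_le_compat_r; [|lra].
    assert (0 <= 4 * eps / b) by (apply Rdiv_le_0_compat; lra). lra.
Qed.

End Progression.

Section NearSet.

Variables (f : nat -> R) (alpha eps : R).
Hypothesis f_zero_one : zero_one f.
Hypothesis f_near : forall i, f i = 1 -> nearZ (INR i * alpha) eps.

(* Cutting [0, T) into windows of length about 2T/M, some window contains two points of the set. *)
Lemma near_set_small_period T : 2 <= rsum f T ->
  exists q : nat, (1 <= q)%nat /\ INR q <= 2 * INR T / rsum f T /\
    nearZ (INR q * alpha) (2 * eps).
Proof.
  intros HM. set (M := rsum f T) in *.
  assert (HT : 0 <= 2 * INR T / M) by (pose proof (pos_INR T); apply Rdiv_le_0_compat; lra).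
  destruct (nat_floor _ HT) as [W0 HW0]. set (W := S W0).
  assert (HW : 2 * INR T / M < INR W) by (unfold W; rewrite S_INR; lra).
  assert (HWpos : 0 < INR W) by (unfold W; apply lt_0_INR; lia).
  destruct (Classical_Prop.classic (exists k, 1 < rsum (fun i => f (k * W + i)%nat) W))
    as [[k Hk]|Hno].
  - destruct (zero_one_exists2 (fun i => f (k * W + i)%nat) W) as [i [i' [Hii [Hf1 Hf2]]]]; auto.
    { intros j; apply f_zero_one. }
    exists (i' - i)%nat. repeat split; [lia| |].
    + rewrite minus_INR by lia. apply Rle_trans with (INR W - 1); [|unfold W; rewrite S_INR; lra].
      assert (INR i' + 1 <= INR W) by (rewrite <- S_INR; apply le_INR; lia).
      pose proof (pos_INR i). lra.
    + replace (INR (i' - i) * alpha) with (INR (k * W + i') * alpha - INR (k * W + i) * alpha)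
        by (rewrite minus_INR, !plus_INR by lia; ring).
      replace (2 * eps) with (eps + eps) by ring. apply nearZ_sub; apply f_near; auto.
  - exfalso.
    assert (M <= (INR T / INR W + 1) * 1).
    { apply rsum_le_windows; [apply zero_one_nonneg; auto|unfold W; lia|].
      intros k. apply Rnot_lt_le; intros h. apply Hno; eauto. }
    assert (INR T / INR W < M / 2).
    { apply (Rmult_lt_reg_r (INR W)); auto. apply (Rmult_lt_reg_r (2 / M)).
      { apply Rdiv_lt_0_compat; lra. }
      field_simplify; lra. }
    lra.
Qed.

Lemma rich_residue_class T q : (1 <= q)%nat ->
  exists r, (r < q)%nat /\
    rsum f T / INR q <= rsum (fun m => f (r + m * q)%nat) (S (T / q)).
Proof.
  intros Hq. assert (Hqr : 0 < INR q) by (apply lt_0_INR; lia).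
  destruct (rsum_exists_ge (fun r => rsum (fun m => f (r + m * q)%nat) (S (T / q))) q
              (rsum f T / INR q)) as [r [Hr Hrich]]; eauto.
  rewrite <- rsum_residues. field_simplify; [|lra].
  apply rsum_le_mono; [apply zero_one_nonneg; auto|].
  pose proof (Nat.mul_succ_div_gt T q). lia.
Qed.

Hypothesis eps_range : 0 < eps <= 1/16.

(* Some residue class mod q is rich, and on it the differences (m' - m) (q alpha - a0) are
   all near Z, which caps the class size unless |q alpha - a0| is small. *)
Lemma near_set_period_refine T q a0 : (1 <= q)%nat -> INR q <= INR T ->
  Rabs (INR q * alpha - IZR a0) <= 2 * eps ->
  384 * eps * INR T <= rsum f T -> 4 * INR q <= rsum f T ->
  Rabs (INR q * alpha - IZR a0) <= 8 * eps * INR q / rsum f T.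
Proof.
  intros Hq HqT Hb2 HM1 HM2. set (M := rsum f T) in *.
  set (beta := INR q * alpha - IZR a0) in *. set (b := Rabs beta) in *.
  assert (Hqr : 1 <= INR q) by (apply (le_INR 1); auto).
  assert (HM : 0 < M) by lra.
  destruct (Rle_lt_dec b 0) as [hb|hb].
  { apply Rle_trans with 0; [lra|]. apply Rdiv_le_0_compat; nra. }
  destruct (rich_residue_class T q Hq) as [r [Hr Hrich]]. fold M in Hrich.
  set (K := S (T / q)) in Hrich.
  assert (HqK : INR q * INR K <= INR T + INR q).
  { unfold K. rewrite S_INR, Rmult_plus_distr_l, <- mult_INR, Rmult_1_r.
    apply Rplus_le_compat_r, le_INR, Nat.Div0.mul_div_le. }
  assert (Hprog := progression_rsum_le (fun m => f (r + m * q)%nat) beta eps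
                     (fun m => f_zero_one _) eps_range).
  assert (Hclass : M / INR q <= (8 * b * INR K + 1) * (4 * eps / b + 1)).
  { eapply Rle_trans; [apply Hrich|]. apply Hprog; [|unfold b in *; lra].
    intros m m' Hm Hm'. apply (nearZ_shift _ ((Z.of_nat m' - Z.of_nat m) * a0)%Z).
    replace ((INR m' - INR m) * beta + IZR ((Z.of_nat m' - Z.of_nat m) * a0))
      with (INR (r + m' * q) * alpha - INR (r + m * q) * alpha).
    - replace (2 * eps) with (eps + eps) by ring. apply nearZ_sub; apply f_near; auto.
    - unfold beta. rewrite mult_IZR, minus_IZR, <- !INR_IZR_INZ, !plus_INR, !mult_INR. ring. }
  assert (Hexp : M <= 32 * eps * (INR q * INR K) + 8 * b * (INR q * INR K)
                      + 4 * eps * INR q / b + INR q).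
  { apply (Rmult_le_compat_l (INR q)) in Hclass; [|lra].
    replace (INR q * (M / INR q)) with M in Hclass by (field; lra).
    eapply Rle_trans; [apply Hclass|]. right. field. lra. }
  assert (H1 : 32 * eps * (INR q * INR K) <= 64 * eps * INR T)
    by (apply Rle_trans with (32 * eps * (INR T + INR q)); [apply Rmult_le_compat_l|]; nra).
  assert (H2 : 8 * b * (INR q * INR K) <= 32 * eps * INR T)
    by (apply Rle_trans with (8 * b * (INR T + INR q)); [apply Rmult_le_compat_l|]; nra).
  assert (Hz : M / 8 <= eps * INR q / b).
  { replace (4 * eps * INR q / b) with (4 * (eps * INR q / b)) in Hexp by (field; lra). lra. }
  apply (Rmult_le_reg_r (M / 8)); [lra|].
  replace (8 * eps * INR q / M * (M / 8)) with (eps * INR q) by (field; lra).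
  apply (Rmult_le_compat_r b) in Hz; [|lra].
  replace (eps * INR q / b * b) with (eps * INR q) in Hz by (field; lra). lra.
Qed.

Lemma near_set_period T :
  2 <= rsum f T -> rsum f T <= INR T ->
  384 * eps * INR T <= rsum f T -> 8 * INR T <= rsum f T ^ 2 ->
  exists q : nat, (1 <= q)%nat /\ INR q <= 2 * INR T / rsum f T /\
    exists a : Z, Rabs (INR q * alpha - IZR a) <= 16 * eps * INR T / rsum f T ^ 2.
Proof.
  intros HM2 HMT HM1 HM3. set (M := rsum f T) in *.
  destruct (near_set_small_period T HM2) as [q [Hq1 [Hq2 [a Ha]]]]. fold M in Hq2.
  exists q; split; auto; split; auto. exists a.
  assert (HqM : INR q * M <= 2 * INR T).
  { apply (Rmult_le_compat_r M) in Hq2; [|lra].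
    replace (2 * INR T / M * M) with (2 * INR T) in Hq2 by (field; lra). lra. }
  assert (Hq0 : 1 <= INR q) by (apply (le_INR 1); auto).
  assert (HqT : INR q <= INR T) by nra.
  assert (H4q : 4 * INR q <= M).
  { apply (Rmult_le_reg_r M); [lra|]. nra. }
  eapply Rle_trans; [apply (near_set_period_refine T q a); auto|].
  replace (16 * eps * INR T / M ^ 2) with (8 * eps * (2 * INR T / M) / M) by (field; lra).
  unfold Rdiv. apply Rmult_le_compat_r; [apply Rlt_le, Rinv_0_lt_compat; lra|].
  apply Rmult_le_compat_l; lra.
Qed.

End NearSet.

Lemma cos_progression_rsum_bound A B m :
  Rabs (rsum (fun s => cos (A + B * INR s)) m) * Rabs (sin (B / 2)) <= 1.
Proof.
  set (F := fun s : nat => sin (A + B * INR s - B / 2)).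
  assert (Htel : 2 * sin (B / 2) * rsum (fun s => cos (A + B * INR s)) m = F m - F O).
  { rewrite <- rsum_scal, <- rsum_telescope. apply rsum_ext; intros s _.
    unfold F. rewrite S_INR.
    replace (A + B * (INR s + 1) - B / 2) with ((A + B * INR s) + B / 2) by field.
    rewrite sin_plus, sin_minus. ring. }
  assert (Hends : Rabs (F m - F O) <= 2).
  { unfold Rminus. eapply Rle_trans; [apply Rabs_triang|]. rewrite Rabs_Ropp.
    unfold F; cbv beta. pose proof (Rabs_le _ 1 (SIN_bound (A + B * INR m - B / 2))).
    pose proof (Rabs_le _ 1 (SIN_bound (A + B * INR 0 - B / 2))). lra. }
  rewrite <- Htel, !Rabs_mult, (Rabs_right 2) in Hends by lra. lra.
Qed.

Lemma rsum_square_diag (F : nat -> nat -> R) T :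
  rsum (fun s => rsum (fun s' => F s s') T) T =
  rsum (fun s => F s s) T + rsum (fun s => rsum (fun s' => F s s') s) T
  + rsum (fun s => rsum (fun s' => F s' s) s) T.
Proof.
  induction T as [|T IH]; [simpl; ring|].
  rewrite rsum_S, (rsum_ext (fun s => rsum (fun s' => F s s') (S T))
                    (fun s => rsum (fun s' => F s s') T + F s T)) by reflexivity.
  rewrite rsum_add, IH. simpl rsum. ring.
Qed.

Lemma rsum_lower_triangle (F : nat -> nat -> R) T :
  rsum (fun s => rsum (fun s' => F s s') s) T =
  rsum (fun d => rsum (fun s' => F (s' + d + 1)%nat s') (T - 1 - d)) T.
Proof.
  induction T as [|T IH]; [reflexivity|].
  rewrite rsum_S, IH, rsum_S. replace (S T - 1 - T)%nat with O by lia. simpl (rsum _ 0).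
  rewrite (rsum_ext (fun d => rsum (fun s' => F (s' + d + 1)%nat s') (S T - 1 - d))
    (fun d => rsum (fun s' => F (s' + d + 1)%nat s') (T - 1 - d) + F T (T - 1 - d)%nat)).
  - rewrite rsum_add, (rsum_rev (fun s' => F T s')). ring.
  - intros d Hd. replace (S T - 1 - d)%nat with (S (T - 1 - d)) by lia.
    rewrite rsum_S. do 3 f_equal. lia.
Qed.

Definition quad_cos (theta : R) (t : nat) : R := cos (2 * PI * theta * INR t ^ 2).

(* |Re sum_{s < T-1-d} e(theta ((s+d+1)^2 - s^2))|, the d-th difference sum of Weyl's method *)
Definition weyl_diff (theta : R) (T d : nat) : R :=
  Rabs (rsum (fun s => cos (2 * PI * theta * INR (S d) ^ 2 + 4 * PI * theta * INR (S d) * INR s))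
             (T - 1 - d)).

Lemma weyl_diff_le theta T d : weyl_diff theta T d <= INR T.
Proof.
  unfold weyl_diff. eapply Rle_trans; [apply rsum_abs|].
  eapply Rle_trans; [apply (rsum_le _ (fun _ => 1)); intros; apply Rabs_le, COS_bound|].
  rewrite rsum_const, Rmult_1_r. apply le_INR. lia.
Qed.

Lemma weyl_diff_sin theta T d :
  weyl_diff theta T d * Rabs (sin (PI * (INR (S d) * (2 * theta)))) <= 1.
Proof.
  unfold weyl_diff.
  replace (PI * (INR (S d) * (2 * theta))) with (4 * PI * theta * INR (S d) / 2) by field.
  apply cos_progression_rsum_bound.
Qed.

Lemma quad_cos_rsum_sq_le theta T :
  rsum (quad_cos theta) T ^ 2 <= INR T + 2 * rsum (weyl_diff theta T) T.
Proof.
  set (phi := fun s : nat => 2 * PI * theta * INR s ^ 2).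
  set (F := fun s s' : nat => cos (phi s - phi s')).
  assert (Hsq : rsum (quad_cos theta) T ^ 2 + rsum (fun s => sin (phi s)) T ^ 2
                = rsum (fun s => rsum (fun s' => F s s') T) T).
  { unfold pow. rewrite !Rmult_1_r, !rsum_mul, <- rsum_add. apply rsum_ext; intros.
    rewrite <- rsum_add. apply rsum_ext; intros. unfold F. rewrite cos_minus. reflexivity. }
  assert (Hdiag : rsum (fun s => F s s) T = INR T).
  { rewrite <- (Rmult_1_r (INR T)), <- rsum_const. apply rsum_ext; intros.
    unfold F. rewrite Rminus_diag, cos_0; auto. }
  assert (Hsym : rsum (fun s => rsum (fun s' => F s' s) s) T
                 = rsum (fun s => rsum (fun s' => F s s') s) T).
  { apply rsum_ext; intros; apply rsum_ext; intros. unfold F.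
    rewrite <- cos_neg. f_equal; ring. }
  assert (Hdiff : rsum (fun s => rsum (fun s' => F s s') s) T <= rsum (weyl_diff theta T) T).
  { rewrite rsum_lower_triangle. apply rsum_le; intros d _. unfold weyl_diff.
    eapply Rle_trans; [|apply Rle_abs]. right. apply rsum_ext; intros s _.
    unfold F, phi. f_equal. rewrite !plus_INR, !S_INR. simpl INR. ring. }
  pose proof (pow2_ge_0 (rsum (fun s => sin (phi s)) T)).
  rewrite rsum_square_diag, Hdiag, Hsym in Hsq. lra.
Qed.

Lemma sin_PI_lower y : 0 <= y <= 1/2 -> y <= 2 * sin (PI * y).
Proof.
  intros Hy. pose proof PI2_1. pose proof PI_4.
  set (a := PI * y). assert (Ha : 0 <= a <= 2) by (unfold a; nra).
  destruct (SIN a) as [Hlb _]; [lra|unfold a; nra|].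
  assert (Hlb_eq : sin_lb a = a * (1 - a^2/6 + (a^2)^2/120 - (a^2)^3/5040)).
  { unfold sin_lb, sin_approx, sin_term. simpl. field. }
  assert (Hpoly : 2/5 <= 1 - a^2/6 + (a^2)^2/120 - (a^2)^3/5040).
  { assert (0 <= a^2 <= 4) by nra. set (u := a^2) in *. nra. }
  assert (2/5 * a <= sin a) by (rewrite Hlb_eq in Hlb; nra).
  unfold a in *. nra.
Qed.

Lemma nearZ_sin x : nearZ x (2 * Rabs (sin (PI * x))).
Proof.
  set (n := Int_part (x + 1/2)). destruct (base_Int_part (x + 1/2)) as [H1 H2]. fold n in H1, H2.
  exists n. set (y := x - IZR n). assert (Hy : -1/2 <= y < 1/2) by (unfold y; lra).
  assert (Hs : Rabs (sin (PI * x)) = Rabs (sin (PI * y))).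
  { replace (PI * x) with (PI * y + IZR n * PI) by (unfold y; ring).
    assert (Hcos : Rabs (cos (IZR n * PI)) = 1).
    { pose proof (sin2_cos2 (IZR n * PI)) as Hc.
      rewrite (sin_eq_0_1 (IZR n * PI)) in Hc by eauto. unfold Rsqr in Hc.
      pose proof (Rabs_pos (cos (IZR n * PI))).
      assert (Rabs (cos (IZR n * PI)) * Rabs (cos (IZR n * PI)) = 1)
        by (rewrite <- Rabs_mult, Rabs_right by nra; lra).
      apply Rle_antisym; nra. }
    rewrite sin_plus, (sin_eq_0_1 (IZR n * PI)) by eauto.
    rewrite Rmult_0_r, Rplus_0_r, Rabs_mult, Hcos. ring. }
  rewrite Hs. fold y. pose proof PI2_1.
  destruct (Rle_lt_dec 0 y).
  - pose proof (sin_PI_lower y). assert (0 <= sin (PI * y)) by (apply sin_ge_0; nra).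
    rewrite Rabs_right, Rabs_right; lra.
  - pose proof (sin_PI_lower (- y)). assert (0 <= sin (PI * - y)) by (apply sin_ge_0; nra).
    replace (PI * - y) with (- (PI * y)) in * by ring. rewrite sin_neg in *.
    rewrite Rabs_left, Rabs_left1; lra.
Qed.

Lemma rsum_pow2 n : rsum (fun j => 2 ^ j) n = 2 ^ n - 1.
Proof. induction n as [|n IH]; simpl rsum; [simpl; ring|]. rewrite IH; simpl; ring. Qed.

Lemma dyadic_le x J :
  x < 2 ^ S J -> x <= 1 + rsum (fun j => 2 ^ j * ind_le (2 ^ j) x) (S J).
Proof.
  induction J as [|J IH]; intros Hx.
  - simpl rsum. simpl in Hx. unfold ind_le; destruct Rle_dec; simpl in *; lra.
  - rewrite rsum_S. destruct (Rlt_le_dec x (2 ^ S J)) as [h|h].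
    + pose proof (IH h).
      assert (0 <= 2 ^ S J * ind_le (2 ^ S J) x)
        by (apply Rmult_le_pos; [apply pow_le; lra|apply ind_le_bounds]).
      lra.
    + rewrite (rsum_ext _ (fun j => 2 ^ j)).
      * rewrite rsum_pow2, ind_le_1 by auto. simpl in *; lra.
      * intros j Hj. rewrite ind_le_1; [ring|].
        eapply Rle_trans; [|apply h]. apply Rle_pow; [lra|lia].
Qed.

Lemma rsum_dyadic_le (D : nat -> R) T J : (forall d, D d < 2 ^ S J) ->
  rsum D T <= INR T + rsum (fun j => 2 ^ j * rsum (fun d => ind_le (2 ^ j) (D d)) T) (S J).
Proof.
  intros HD. eapply Rle_trans.
  - apply (rsum_le _ (fun d => 1 + rsum (fun j => 2 ^ j * ind_le (2 ^ j) (D d)) (S J))).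
    intros; apply dyadic_le; auto.
  - rewrite rsum_add, rsum_const, Rmult_1_r, rsum_swap. right. f_equal.
    apply rsum_ext; intros. now rewrite rsum_scal.
Qed.

Lemma log2_le_ln (T : nat) L : (1 <= T)%nat -> 1 <= L -> ln (INR T) <= L ->
  INR (S (Nat.log2 T)) <= 3 * L.
Proof.
  intros HT HL HlnT. destruct (Nat.log2_spec T) as [HJ _]; [lia|].
  assert (H2 : 2 ^ Nat.log2 T <= INR T).
  { replace 2 with (INR 2) by reflexivity. rewrite <- pow_INR. now apply le_INR. }
  assert (Hpos : 0 < 2 ^ Nat.log2 T) by (apply pow_lt; lra).
  assert (Hln : ln (2 ^ Nat.log2 T) <= L).
  { eapply Rle_trans; [|apply HlnT]. destruct (Rle_lt_or_eq_dec _ _ H2) as [h|h].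
    - left; apply ln_increasing; auto.
    - rewrite h; lra. }
  rewrite ln_pow in Hln by lra. pose proof ln_lt_2. pose proof (pos_INR (Nat.log2 T)).
  assert (INR (Nat.log2 T) * / 2 <= INR (Nat.log2 T) * ln 2) by (apply Rmult_le_compat_l; lra).
  rewrite S_INR. lra.
Qed.

Definition large_diff_count (theta : R) (T : nat) (h : R) : R :=
  rsum (fun d => ind_le h (weyl_diff theta T d)) T.

(* Weyl differencing followed by a dyadic decomposition of the sizes of the difference sums. *)
Lemma quad_cos_rsum_level theta T B L : (1 <= T)%nat -> 1 <= L -> ln (INR T) <= L ->
  B <= rsum (quad_cos theta) T ^ 2 -> 6 * INR T <= B ->
  exists j : nat, 2 ^ j <= INR T /\ B / (12 * L) <= 2 ^ j * large_diff_count theta T (2 ^ j).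
Proof.
  intros HT HL HlnT HB H6T. set (J := Nat.log2 T).
  assert (HTr : 1 <= INR T) by (apply (le_INR 1); auto).
  destruct (Nat.log2_spec T) as [_ HJ2]; [lia|]. fold J in HJ2.
  assert (HTJ : INR T < 2 ^ S J).
  { replace 2 with (INR 2) by reflexivity. rewrite <- pow_INR. now apply lt_INR. }
  assert (HD : forall d, weyl_diff theta T d < 2 ^ S J)
    by (intros d; eapply Rle_lt_trans; [apply weyl_diff_le|auto]).
  pose proof (rsum_dyadic_le _ T J HD) as Hdy.
  pose proof (quad_cos_rsum_sq_le theta T) as Hweyl.
  pose proof (log2_le_ln T L HT HL HlnT) as HJL. fold J in HJL.
  destruct (rsum_exists_ge (fun j => 2 ^ j * large_diff_count theta T (2 ^ j)) (S J)
              (B / (12 * L))) as [j [Hj HjB]]; [lia| |].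
  - assert (HJB : INR (S J) * (B / (12 * L)) <= 3 * L * (B / (12 * L)))
      by (apply Rmult_le_compat_r; [apply Rdiv_le_0_compat; lra|auto]).
    replace (3 * L * (B / (12 * L))) with (B / 4) in HJB by (field; lra).
    unfold large_diff_count. lra.
  - exists j. split; auto. apply Rle_trans with (2 ^ J).
    + apply Rle_pow; [lra|lia].
    + replace 2 with (INR 2) by reflexivity. rewrite <- pow_INR.
      apply le_INR, Nat.log2_spec; lia.
Qed.

Lemma weyl_diff_large_nearZ theta T d h : 0 < h -> h <= weyl_diff theta T d ->
  nearZ (INR (S d) * (2 * theta)) (2 / h).
Proof.
  intros Hh Hd. pose proof (weyl_diff_sin theta T d) as Hs.
  set (x := INR (S d) * (2 * theta)) in *.
  assert (Rabs (sin (PI * x)) <= 1 / h).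
  { apply (Rmult_le_reg_l h); [lra|]. field_simplify; [|lra].
    pose proof (Rabs_pos (sin (PI * x))). nra. }
  destruct (nearZ_sin x) as [m Hm]. exists m.
  replace (2 / h) with (2 * (1 / h)) by (field; lra). lra.
Qed.

(* The d with a large difference sum have 2 (d+1) theta near Z, and they are many. *)
Lemma large_diff_period theta T j A : (1 <= T)%nat -> 2 ^ j <= INR T ->
  A <= 2 ^ j * large_diff_count theta T (2 ^ j) ->
  768 * (INR T + 1) <= A -> 8 * (INR T + 1) * INR T ^ 2 <= A ^ 2 ->
  exists (q : nat) (a : Z), (1 <= q)%nat /\ INR q * A <= 2 * (INR T + 1) * INR T /\
    Rabs (INR q * (2 * theta) - IZR a) * A ^ 2 <= 32 * (INR T + 1) * INR T.
Proof.
  intros HT HjT HA HA1 HA2.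
  set (f := fun i => match i with O => 0 | S d => ind_le (2 ^ j) (weyl_diff theta T d) end).
  set (M := large_diff_count theta T (2 ^ j)) in *. set (eps := 2 / 2 ^ j).
  assert (HTr : 1 <= INR T) by (apply (le_INR 1); auto).
  assert (H2j : 0 < 2 ^ j) by (apply pow_lt; lra).
  assert (Hf01 : zero_one f) by (intros [|d]; simpl; [auto|unfold ind_le; destruct Rle_dec; auto]).
  assert (HfM : rsum f (S T) = M) by (unfold f, M, large_diff_count; rewrite rsum_shift; ring).
  assert (Hfn : forall i, f i = 1 -> nearZ (INR i * (2 * theta)) eps).
  { intros [|d] Hi; simpl in Hi; [lra|].
    apply weyl_diff_large_nearZ with T; [lra|]. apply ind_le_pos; lra. }
  assert (HMT : M <= INR (S T)) by (rewrite <- HfM; apply zero_one_rsum_le; auto).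
  assert (HMA : A <= 2 ^ j * M) by auto.
  assert (HM0 : 0 <= M) by (rewrite <- HfM; apply rsum_nonneg; intros; apply zero_one_nonneg; auto).
  assert (HATM : A <= INR T * M) by nra.
  assert (HM2 : 8 * INR (S T) <= M ^ 2).
  { rewrite S_INR. apply (Rmult_le_reg_r (INR T ^ 2)); [nra|].
    apply Rle_trans with (A ^ 2); [lra|]. assert (0 <= A) by lra. nra. }
  assert (HM384 : 384 * eps * INR (S T) <= M).
  { unfold eps. rewrite S_INR. apply (Rmult_le_reg_r (2 ^ j)); auto. field_simplify; lra. }
  assert (Heps : 0 < eps) by (unfold eps; apply Rdiv_lt_0_compat; lra).
  assert (HM2' : 2 <= M) by (rewrite S_INR in HM2; nra).
  assert (Heps16 : eps <= 1/16) by (rewrite S_INR in HM384, HMT; nra).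
  rewrite <- HfM in HMT, HM2', HM384, HM2.
  destruct (near_set_period f (2 * theta) eps Hf01 Hfn (conj Heps Heps16) (S T) HM2' HMT HM384 HM2)
    as [q [Hq1 [Hq2 [a Ha]]]].
  rewrite HfM, S_INR in *. exists q, a. split; auto. split.
  - apply (Rmult_le_compat_r M) in Hq2; [|lra].
    replace (2 * (INR T + 1) / M * M) with (2 * (INR T + 1)) in Hq2 by (field; lra).
    assert (0 <= INR q) by apply pos_INR. nra.
  - apply (Rmult_le_compat_r (M ^ 2)) in Ha; [|nra].
    replace (16 * eps * (INR T + 1) / M ^ 2 * M ^ 2) with (32 * (INR T + 1) / 2 ^ j) in Ha
      by (unfold eps; field; lra).
    set (r := Rabs (INR q * (2 * theta) - IZR a)) in *. assert (0 <= r) by apply Rabs_pos.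
    assert (A ^ 2 <= (2 ^ j * M) * (INR T * M)) by (assert (0 <= A) by lra; nra).
    apply Rle_trans with (r * (2 ^ j * M) * (INR T * M)); [nra|].
    replace (r * (2 ^ j * M) * (INR T * M)) with (r * M ^ 2 * 2 ^ j * INR T) by ring.
    apply Rle_trans with (32 * (INR T + 1) / 2 ^ j * 2 ^ j * INR T); [|right; field; lra].
    apply Rmult_le_compat_r; [lra|]. apply Rmult_le_compat_r; lra.
Qed.

Lemma quad_cos_rsum_period theta T B L : (1 <= T)%nat -> 1 <= L -> ln (INR T) <= L ->
  B <= rsum (quad_cos theta) T ^ 2 -> 6 * INR T <= B ->
  9216 * L * (INR T + 1) <= B -> 1152 * L ^ 2 * (INR T + 1) * INR T ^ 2 <= B ^ 2 ->
  exists (q : nat) (a : Z), (1 <= q)%nat /\ INR q * B <= 24 * L * (INR T + 1) * INR T /\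
    Rabs (INR q * (2 * theta) - IZR a) * B ^ 2 <= 4608 * L ^ 2 * (INR T + 1) * INR T.
Proof.
  intros HT HL HlnT HB H6T HB1 HB2.
  destruct (quad_cos_rsum_level theta T B L HT HL HlnT HB H6T) as [j [HjT Hj]].
  destruct (large_diff_period theta T j (B / (12 * L)) HT HjT Hj) as [q [a [Hq1 [Hq2 Hqa]]]].
  - apply (Rmult_le_reg_r (12 * L)); [lra|]. field_simplify; lra.
  - apply (Rmult_le_reg_r (144 * L ^ 2)); [nra|]. field_simplify; lra.
  - exists q, a. split; auto. split.
    + apply (Rmult_le_compat_r (12 * L)) in Hq2; [|lra].
      replace (INR q * (B / (12 * L)) * (12 * L)) with (INR q * B) in Hq2 by (field; lra). lra.
    + apply (Rmult_le_compat_r (144 * L ^ 2)) in Hqa; [|nra].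
      replace (Rabs (INR q * (2 * theta) - IZR a) * (B / (12 * L)) ^ 2 * (144 * L ^ 2))
        with (Rabs (INR q * (2 * theta) - IZR a) * B ^ 2) in Hqa by (field; lra). lra.
Qed.

Lemma rsum_by_parts (a c : nat -> R) n :
  rsum (fun t => a t * c t) n = a n * rsum c n - rsum (fun t => (a (S t) - a t) * rsum c (S t)) n.
Proof. induction n as [|n IH]; [simpl; ring|]. rewrite !rsum_S, IH. ring. Qed.

Lemma rsum_symmetric (G : Z -> R) N :
  rsum (fun k => G (Z.of_nat k - Z.of_nat N)%Z) (S (2 * N)) =
  G 0%Z + rsum (fun x => G (Z.of_nat (S x)) + G (- Z.of_nat (S x))%Z) N.
Proof.
  induction N as [|N IH]; [simpl; ring|].
  replace (S (2 * S N)) with (S (S (S (2 * N)))) by lia.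
  rewrite rsum_S, rsum_shift, (rsum_S _ N).
  rewrite (rsum_ext (fun i => G (Z.of_nat (S i) - Z.of_nat (S N))%Z)
                    (fun k => G (Z.of_nat k - Z.of_nat N)%Z)) by (intros; f_equal; lia).
  rewrite IH. replace (Z.of_nat 0 - Z.of_nat (S N))%Z with (- Z.of_nat (S N))%Z by lia.
  replace (Z.of_nat (S (S (2 * N))) - Z.of_nat (S N))%Z with (Z.of_nat (S N)) by lia. ring.
Qed.

Lemma ghat_sum_even w X theta (h : R -> R) :
  rsum (fun k => g_box w X (Z.of_nat k - Z.of_nat (gN X)) *
                 h (2 * PI * theta * IZR (Z.of_nat k - Z.of_nat (gN X)))) (S (2 * gN X)) =
  rsum (fun x => g_box w X (Z.of_nat (S x)) *
                 (h (2 * PI * theta * INR (S x)) + h (- (2 * PI * theta * INR (S x))))) (gN X).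
Proof.
  rewrite (rsum_symmetric (fun x => g_box w X x * h (2 * PI * theta * IZR x))).
  replace (g_box w X 0) with 0 by (unfold g_box; simpl; ring). rewrite Rmult_0_l, Rplus_0_l.
  apply rsum_ext; intros x _. rewrite opp_IZR, <- INR_IZR_INZ.
  replace (2 * PI * theta * - INR (S x)) with (- (2 * PI * theta * INR (S x))) by ring.
  (* g_box only depends on |x| *)
  change (g_box w X (- Z.of_nat (S x))) with (g_box w X (Z.of_nat (S x))). ring.
Qed.

Lemma ghat_im_0 w X theta : ghat_im w X theta = 0.
Proof.
  unfold ghat_im. rewrite sum_f_R0_rsum, (ghat_sum_even w X theta sin).
  rewrite (rsum_ext _ (fun _ => 0)); [rewrite rsum_const; ring|].
  intros x _. rewrite sin_neg. ring.
Qed.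

Lemma ghat_abs_re w X theta : ghat_abs w X theta = Rabs (ghat_re w X theta).
Proof.
  unfold ghat_abs. rewrite ghat_im_0, <- sqrt_Rsqr_abs. f_equal. unfold Rsqr. ring.
Qed.

Lemma rsum_squares (psi : nat -> R) N :
  rsum (fun x => if Nat.eqb (Nat.sqrt (S x) * Nat.sqrt (S x)) (S x) then psi (S x) else 0) N =
  rsum (fun t => psi (S t * S t)%nat) (Nat.sqrt N).
Proof.
  induction N as [|N IH]; [reflexivity|].
  rewrite rsum_S, IH. destruct (Nat.sqrt_succ_or N) as [h|h]; rewrite h.
  - pose proof (Nat.sqrt_spec (S N)) as h1. pose proof (Nat.sqrt_spec N) as h2.
    rewrite h in h1. rewrite rsum_S.
    replace (S (Nat.sqrt N) * S (Nat.sqrt N))%nat with (S N) by lia.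
    now rewrite Nat.eqb_refl.
  - pose proof (Nat.sqrt_spec N) as h2.
    replace (Nat.eqb (Nat.sqrt N * Nat.sqrt N) (S N)) with false
      by (symmetry; apply Nat.eqb_neq; lia).
    ring.
Qed.

Definition sq_weight (w : R -> R) (X : R) (t : nat) : R := INR t * w (INR t ^ 2 / X).

Lemma ghat_re_quad w X theta : ghat_re w X theta =
  2 * rsum (fun t => sq_weight w X t * quad_cos theta t) (S (Nat.sqrt (gN X))).
Proof.
  unfold ghat_re. rewrite sum_f_R0_rsum, (ghat_sum_even w X theta cos), <- rsum_scal.
  set (psi := fun k => 2 * (INR (Nat.sqrt k) * w (INR k / X) * cos (2 * PI * theta * INR k))).
  rewrite (rsum_ext _ (fun x => if Nat.eqb (Nat.sqrt (S x) * Nat.sqrt (S x)) (S x)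
                                then psi (S x) else 0)).
  - rewrite rsum_squares, rsum_shift. unfold sq_weight. simpl (INR 0).
    rewrite Rmult_0_l, Rmult_0_l, Rmult_0_r, Rplus_0_l.
    apply rsum_ext; intros t _. unfold psi, quad_cos.
    rewrite Nat.sqrt_square, mult_INR, <- Rsqr_pow2. unfold Rsqr. ring.
  - intros x _. unfold g_box, psi. rewrite Zabs2Nat.id, cos_neg.
    destruct Nat.eqb; ring.
Qed.

Lemma Derive_bounded_of_support (f : R -> R) :
  (forall x, continuity_pt (Derive f) x) -> (forall x, 1 < Rabs x -> f x = 0) ->
  exists K, 0 <= K /\ forall x, Rabs (Derive f x) <= K.
Proof.
  intros Hc Hsupp.
  destruct (continuity_ab_maj (fun x => Rabs (Derive f x)) (-1) 1) as [Mx [HM _]]; [lra| |].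
  { intros c _. apply (continuity_pt_comp (Derive f) Rabs); auto. apply Rcontinuity_abs. }
  exists (Rabs (Derive f Mx)). split; [apply Rabs_pos|]. intros x.
  destruct (Rle_lt_dec (Rabs x) 1) as [hx|hx]; [apply HM, Rabs_le_between, hx|].
  assert (Hflat : Derive f x = 0).
  { rewrite <- (Derive_const 0 x). apply Derive_ext_loc.
    assert (Heps : 0 < Rabs x - 1) by lra.
    assert (Hfar : forall y, Rabs (y - x) < Rabs x - 1 -> 1 < Rabs y).
    { intros y Hy. pose proof (Rabs_triang_inv x (x - y)) as Htri.
      replace (x - (x - y)) with y in Htri by ring. rewrite Rabs_minus_sym in Hy. lra. }
    exists (mkposreal _ Heps). intros y Hy. apply Hsupp, Hfar, Hy. }
  rewrite Hflat, Rabs_R0. apply Rabs_pos.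
Qed.

Lemma lipschitz_of_Derive_bound (f : R -> R) K :
  (forall x, ex_derive f x) -> (forall x, Rabs (Derive f x) <= K) ->
  forall x y, Rabs (f x - f y) <= K * Rabs (x - y).
Proof.
  intros Hd HK.
  assert (Hmvt : forall a b, a < b -> Rabs (f b - f a) <= K * Rabs (b - a)).
  { intros a b Hab. destruct (MVT_cor2 f (Derive f) a b Hab) as [c [Hc _]].
    { intros c _. apply is_derive_Reals, Derive_correct, Hd. }
    rewrite Hc, Rabs_mult. apply Rmult_le_compat_r; [apply Rabs_pos|apply HK]. }
  intros x y. destruct (Rtotal_order x y) as [h|[h|h]].
  - rewrite Rabs_minus_sym, (Rabs_minus_sym x). now apply Hmvt.
  - subst. rewrite !Rminus_diag, Rabs_R0. lra.
  - now apply Hmvt.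
Qed.

Lemma smooth_compact_support_lipschitz (f : R -> R) :
  (forall n x, ex_derive (Derive_n f n) x) -> (forall x, 1 < Rabs x -> f x = 0) ->
  exists K, 0 <= K /\ forall x y, Rabs (f x - f y) <= K * Rabs (x - y).
Proof.
  intros Hsmooth Hsupp. destruct (Derive_bounded_of_support f) as [K [HK HDK]]; auto.
  - intros x. apply continuity_pt_filterlim, (ex_derive_continuous (Derive f)), (Hsmooth 1%nat).
  - exists K. split; auto. apply lipschitz_of_Derive_bound; auto. apply (Hsmooth O).
Qed.

Section Weight.

Variables (w : R -> R) (K X : R).
Hypothesis w_range : forall x, 0 <= w x <= 1.
Hypothesis w_supp : forall x, 1 < Rabs x -> w x = 0.
Hypothesis w_lip : forall x y, Rabs (w x - w y) <= K * Rabs (x - y).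
Hypothesis X_ge_4 : 4 <= X.

Lemma lipschitz_const_nonneg : 0 <= K.
Proof.
  pose proof (w_lip 0 1) as H01. pose proof (Rabs_pos (w 0 - w 1)).
  rewrite Rminus_0_l, Rabs_Ropp, Rabs_R1 in H01. lra.
Qed.

Lemma sq_weight_step_le t : INR t ^ 2 <= X + 1 ->
  Rabs (sq_weight w X (S t) - sq_weight w X t) <= 1 + 6 * K.
Proof.
  intros Ht. unfold sq_weight. rewrite S_INR.
  pose proof lipschitz_const_nonneg as HK.
  set (u := (INR t + 1) ^ 2 / X). set (v := INR t ^ 2 / X).
  replace ((INR t + 1) * w u - INR t * w v) with (w u + INR t * (w u - w v)) by ring.
  eapply Rle_trans; [apply Rabs_triang|].
  rewrite Rabs_mult, (Rabs_right (INR t)) by (apply Rle_ge, pos_INR).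
  assert (Hu : Rabs (w u) <= 1) by (apply Rabs_le; pose proof (w_range u); lra).
  assert (Huv : u - v = (2 * INR t + 1) / X) by (unfold u, v; field; lra).
  pose proof (w_lip u v) as Hl. rewrite Huv, (Rabs_right ((2 * INR t + 1) / X)) in Hl
    by (apply Rle_ge, Rdiv_le_0_compat; [pose proof (pos_INR t)|]; lra).
  assert (Htt : INR t <= INR t ^ 2)
    by (destruct t; [simpl; lra|rewrite S_INR; pose proof (pos_INR t); nra]).
  assert (INR t * ((2 * INR t + 1) / X) <= 6).
  { apply (Rmult_le_reg_r X); [lra|]. field_simplify; lra. }
  assert (INR t * Rabs (w u - w v) <= 6 * K).
  { apply Rle_trans with (INR t * (K * ((2 * INR t + 1) / X))).
    - apply Rmult_le_compat_l; [apply pos_INR|auto].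
    - replace (INR t * (K * ((2 * INR t + 1) / X))) with (K * (INR t * ((2 * INR t + 1) / X)))
        by ring. nra. }
  lra.
Qed.

Lemma gN_bounds : X < INR (gN X) <= X + 1.
Proof.
  destruct (archimed X) as [h1 h2]. unfold gN.
  assert (0 < up X)%Z by (apply lt_IZR; lra).
  rewrite INR_IZR_INZ, Z2Nat.id by lia. lra.
Qed.

(* Abel summation against the slowly varying weights t w(t^2/X); the boundary term vanishes
   because w(n^2/X) = 0 for the last index n. *)
Lemma ghat_abs_le_partial_sums theta :
  ghat_abs w X theta <= 2 * (1 + 6 * K) *
    rsum (fun t => Rabs (rsum (quad_cos theta) (S t))) (S (Nat.sqrt (gN X))).
Proof.
  destruct gN_bounds as [HN1 HN2].
  set (N := gN X) in *. set (n := S (Nat.sqrt N)).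
  pose proof (Nat.sqrt_spec N (Nat.le_0_l _)) as Hsq.
  assert (Hn : INR N < INR n ^ 2)
    by (replace (INR n ^ 2) with (INR (n * n)) by (rewrite mult_INR; ring); apply lt_INR; lia).
  assert (Han : sq_weight w X n = 0).
  { unfold sq_weight. rewrite w_supp; [ring|]. rewrite Rabs_right.
    - apply (Rmult_lt_reg_r X); [lra|]. field_simplify; lra.
    - apply Rle_ge, Rdiv_le_0_compat; [apply pow_le, pos_INR|lra]. }
  rewrite ghat_abs_re, ghat_re_quad, rsum_by_parts. fold N n.
  rewrite Han, Rmult_0_l, Rminus_0_l, Rabs_mult, Rabs_Ropp, (Rabs_right 2) by lra.
  rewrite Rmult_assoc. apply Rmult_le_compat_l; [lra|].
  eapply Rle_trans; [apply rsum_abs|]. rewrite <- rsum_scal. apply rsum_le; intros t Ht.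
  rewrite Rabs_mult. apply Rmult_le_compat_r; [apply Rabs_pos|]. apply sq_weight_step_le.
  assert (INR t ^ 2 <= INR N); [|lra].
  replace (INR t ^ 2) with (INR (t * t)) by (rewrite mult_INR; ring). apply le_INR.
  unfold n in Ht. nia.
Qed.

Lemma large_partial_sum theta delta : 0 < delta -> delta * X <= ghat_abs w X theta ->
  delta <= 8 * (1 + 6 * K) /\
  exists T : nat, (1 <= T)%nat /\ INR T ^ 2 <= 4 * X /\
    delta ^ 2 * X / (16 * (1 + 6 * K) ^ 2) <= rsum (quad_cos theta) T ^ 2.
Proof.
  intros Hd Hg. set (K1 := 1 + 6 * K).
  assert (HK1 : 1 <= K1) by (pose proof lipschitz_const_nonneg; unfold K1; lra).
  destruct gN_bounds as [HN1 HN2].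
  set (n := S (Nat.sqrt (gN X))).
  pose proof (Nat.sqrt_spec (gN X) (Nat.le_0_l _)) as Hsq.
  assert (Hsqr : INR (Nat.sqrt (gN X)) ^ 2 <= X + 1).
  { replace (INR (Nat.sqrt (gN X)) ^ 2) with (INR (Nat.sqrt (gN X) * Nat.sqrt (gN X)))
      by (rewrite mult_INR; ring). apply Rle_trans with (INR (gN X)); [apply le_INR|]; lia || lra. }
  assert (Hn1 : 1 <= INR n)
    by (unfold n; rewrite S_INR; pose proof (pos_INR (Nat.sqrt (gN X))); lra).
  assert (Hn2 : INR n ^ 2 <= 4 * X)
    by (unfold n; rewrite S_INR; pose proof (pos_INR (Nat.sqrt (gN X))); nra).
  pose proof (ghat_abs_le_partial_sums theta) as Hsum. fold K1 n in Hsum.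
  destruct (rsum_exists_ge (fun t => Rabs (rsum (quad_cos theta) (S t))) n
              (delta * X / (2 * K1 * INR n))) as [t [Ht HCt]]; [unfold n; lia| |].
  { replace (INR n * (delta * X / (2 * K1 * INR n))) with (delta * X / (2 * K1)) by (field; lra).
    apply (Rmult_le_reg_r (2 * K1)); [lra|]. field_simplify; lra. }
  assert (HCT : Rabs (rsum (quad_cos theta) (S t)) <= INR n).
  { eapply Rle_trans; [apply rsum_abs|].
    eapply Rle_trans; [apply (rsum_le _ (fun _ => 1)); intros; apply Rabs_le, COS_bound|].
    rewrite rsum_const, Rmult_1_r. apply le_INR; lia. }
  assert (Hlow : 0 <= delta * X / (2 * K1 * INR n)) by (apply Rdiv_le_0_compat; nra).
  split.
  - assert (Hn : delta * X / (2 * K1 * INR n) * (2 * K1 * INR n) <= INR n * (2 * K1 * INR n))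
      by (apply Rmult_le_compat_r; nra).
    replace (delta * X / (2 * K1 * INR n) * (2 * K1 * INR n)) with (delta * X) in Hn
      by (field; lra).
    apply (Rmult_le_reg_r X); nra.
  - exists (S t). repeat split; [lia| |].
    + assert (INR (S t) <= INR n) by (apply le_INR; lia). pose proof (pos_INR (S t)). nra.
    + apply Rle_trans with ((delta * X / (2 * K1 * INR n)) ^ 2).
      * replace ((delta * X / (2 * K1 * INR n)) ^ 2)
          with (delta ^ 2 * X / (16 * K1 ^ 2) * (4 * X / INR n ^ 2)) by (field; lra).
        rewrite <- (Rmult_1_r (delta ^ 2 * X / (16 * K1 ^ 2))) at 1.
        apply Rmult_le_compat_l; [apply Rdiv_le_0_compat; nra|].
        apply (Rmult_le_reg_r (INR n ^ 2)); [nra|]. field_simplify; lra.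
      * rewrite <- (pow2_abs (rsum (quad_cos theta) (S t))). apply pow_incr. lra.
Qed.

End Weight.

Lemma root40_pow X n : Rpower X (1/40) ^ n = Rpower X (INR n / 40).
Proof. rewrite <- Rpower_pow, Rpower_mult by apply exp_pos. f_equal; field. Qed.

Lemma root40_pow40 X : 0 < X -> Rpower X (1/40) ^ 40 = X.
Proof.
  intros HX. rewrite root40_pow. replace (INR 40 / 40) with 1 by (simpl; field).
  now apply Rpower_1.
Qed.

Lemma Rpower_neg_tenth X : Rpower X (- (1/10)) = / Rpower X (1/40) ^ 4.
Proof. rewrite root40_pow, <- Rpower_Ropp. f_equal. simpl. field. Qed.

Lemma ln_le_root40 X : 0 < X -> ln X <= 40 * Rpower X (1/40).
Proof.
  intros HX. set (s := Rpower X (1/40)). assert (Hs : 0 < s) by apply exp_pos.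
  rewrite <- (root40_pow40 X HX), ln_pow by auto. fold s.
  assert (ln s < s).
  { rewrite <- (ln_exp s) at 2. apply ln_increasing; auto. pose proof (exp_ineq1 s). lra. }
  simpl INR. lra.
Qed.

Lemma root40_ge X s0 : 0 < s0 -> s0 ^ 40 <= X -> s0 <= Rpower X (1/40).
Proof.
  intros Hs0 HX. replace s0 with (Rpower (s0 ^ 40) (1/40)).
  - apply Rle_Rpower_l; [lra|]. split; [apply pow_lt|]; auto.
  - rewrite <- Rpower_pow, Rpower_mult by auto. replace (INR 40 * (1/40)) with 1 by (simpl; field).
    now apply Rpower_1.
Qed.

Lemma root40_scale_conditions K1 s delta T L : 1 <= K1 -> 10000000000 * K1 ^ 4 <= s ->
  1 <= delta * s ^ 4 -> 1 <= T -> T ^ 2 <= 4 * s ^ 40 -> 0 <= L <= 40 * s ->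
  let B := delta ^ 2 * s ^ 40 / (16 * K1 ^ 2) in
  6 * T <= B /\ 9216 * L * (T + 1) <= B /\ 1152 * L ^ 2 * (T + 1) * T ^ 2 <= B ^ 2.
Proof.
  intros HK1 Hs Hds HT HT2 HL B.
  assert (HK : K1 ^ 2 <= K1 ^ 4) by (apply Rle_pow; [lra|lia]).
  assert (HK2 : 1 <= K1 ^ 2) by (apply pow_R1_Rle; lra).
  assert (Hs1 : 1 <= s) by nra.
  set (P := s ^ 20).
  assert (HP : 1 <= P) by (apply pow_R1_Rle; lra).
  assert (HTP : T <= 2 * P) by (replace (s ^ 40) with (P ^ 2) in HT2 by (unfold P; ring); nra).
  assert (HB : s ^ 12 * P <= 16 * K1 ^ 2 * B).
  { unfold B, P. replace (delta ^ 2 * s ^ 40) with ((delta * s ^ 4) ^ 2 * s ^ 32) by ring.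
    field_simplify; [|lra]. assert (1 <= (delta * s ^ 4) ^ 2) by (apply pow_R1_Rle; lra).
    assert (0 <= s ^ 32) by (apply pow_le; lra).
    replace (s ^ 12 * s ^ 20) with (s ^ 32) by ring. nra. }
  assert (Hs11 : s <= s ^ 11) by (rewrite <- pow_1 at 1; apply Rle_pow; [lra|lia]).
  assert (HsB : s ^ 11 * s * P <= 16 * K1 ^ 2 * B)
    by (replace (s ^ 11 * s) with (s ^ 12) by ring; lra).
  assert (Hbig : 23592960 * K1 ^ 2 <= s ^ 11) by nra.
  assert (HP0 : 0 <= s * P) by nra.
  split; [|split].
  - assert (192 * K1 ^ 2 * P <= s ^ 11 * s * P) by nra. nra.
  - assert (9216 * L * (T + 1) <= 1474560 * s * P) by nra.
    assert (23592960 * K1 ^ 2 * (s * P) <= s ^ 11 * (s * P)) by nra. nra.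
  - assert (Hlhs : 1152 * L ^ 2 * (T + 1) * T ^ 2 <= 29491200 * s ^ 2 * P ^ 3).
    { assert (L ^ 2 <= 1600 * s ^ 2) by nra. assert (T + 1 <= 4 * P) by lra.
      assert (T ^ 2 <= 4 * P ^ 2) by nra. assert (0 <= T ^ 2) by nra.
      assert (0 <= L ^ 2) by nra.
      apply Rle_trans with (1152 * (1600 * s ^ 2) * (4 * P) * (4 * P ^ 2)); [|right; ring].
      apply Rmult_le_compat; [nra|lra| |lra].
      apply Rmult_le_compat; [nra|lra| |lra].
      apply Rmult_le_compat_l; lra. }
    assert (Hrhs : s ^ 24 * P ^ 2 <= 256 * K1 ^ 4 * B ^ 2).
    { assert (0 <= s ^ 12 * P) by (apply Rmult_le_pos; [apply pow_le|]; lra).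
      replace (s ^ 24 * P ^ 2) with ((s ^ 12 * P) ^ 2) by ring.
      replace (256 * K1 ^ 4 * B ^ 2) with ((16 * K1 ^ 2 * B) ^ 2) by ring.
      apply pow_incr; lra. }
    assert (Hs24 : 7549747200 * K1 ^ 4 * s ^ 2 * P <= s ^ 24).
    { replace (s ^ 24) with (s ^ 2 * s ^ 2 * P) by (unfold P; ring).
      assert (7549747200 * K1 ^ 4 <= s ^ 2) by nra.
      assert (0 <= s ^ 2 * P) by nra. nra. }
    nra.
Qed.

Lemma period_bounds_in_delta K1 L delta X (T : nat) (q r : R) : 1 <= K1 -> 1 <= L ->
  0 < delta <= 8 * K1 -> 0 < X -> 1 <= INR T -> INR T ^ 2 <= 4 * X -> 0 <= r ->
  let B := delta ^ 2 * X / (16 * K1 ^ 2) in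
  q * B <= 24 * L * (INR T + 1) * INR T -> r * B ^ 2 <= 4608 * L ^ 2 * (INR T + 1) * INR T ->
  2 * q <= 393216 * K1 ^ 4 * L ^ 2 / delta ^ 4 /\ r <= 9437184 * K1 ^ 4 * L ^ 2 / delta ^ 4 / X.
Proof.
  intros HK1 HL Hd HX HT HT2 Hr B Hq Hqr.
  assert (HTT : (INR T + 1) * INR T <= 8 * X) by nra.
  assert (Hd2 : 0 < delta ^ 2) by (apply pow_lt; lra).
  assert (HK2 : 0 < K1 ^ 2) by (apply pow_lt; lra).
  split.
  - assert (Hq' : q * delta ^ 2 <= 3072 * K1 ^ 2 * L).
    { apply (Rmult_le_reg_r (X / (16 * K1 ^ 2))); [apply Rdiv_lt_0_compat; lra|].
      replace (q * delta ^ 2 * (X / (16 * K1 ^ 2))) with (q * B) by (unfold B; field; lra).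
      replace (3072 * K1 ^ 2 * L * (X / (16 * K1 ^ 2))) with (24 * L * (8 * X)) by (field; lra).
      nra. }
    apply (Rmult_le_reg_r (delta ^ 4)); [apply pow_lt; lra|].
    replace (393216 * K1 ^ 4 * L ^ 2 / delta ^ 4 * delta ^ 4) with (393216 * K1 ^ 4 * L ^ 2)
      by (field; lra).
    assert (delta ^ 2 <= 64 * K1 ^ 2) by nra.
    replace (2 * q * delta ^ 4) with (2 * (q * delta ^ 2) * delta ^ 2) by ring.
    apply Rle_trans with (2 * (3072 * K1 ^ 2 * L) * delta ^ 2); [apply Rmult_le_compat_r; lra|].
    apply Rle_trans with (2 * (3072 * K1 ^ 2 * L) * (64 * K1 ^ 2)); [apply Rmult_le_compat_l; nra|].
    assert (0 <= K1 ^ 4) by (apply pow_le; lra). nra.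
  - apply (Rmult_le_reg_r (delta ^ 4 * X ^ 2 / (256 * K1 ^ 4))).
    { apply Rdiv_lt_0_compat; [|nra]. apply Rmult_lt_0_compat; [apply pow_lt|]; nra. }
    replace (r * (delta ^ 4 * X ^ 2 / (256 * K1 ^ 4))) with (r * B ^ 2) by (unfold B; field; lra).
    replace (9437184 * K1 ^ 4 * L ^ 2 / delta ^ 4 / X * (delta ^ 4 * X ^ 2 / (256 * K1 ^ 4)))
      with (4608 * L ^ 2 * (8 * X)) by (field; nra).
    apply Rle_trans with (4608 * L ^ 2 * (INR T + 1) * INR T); [auto|].
    assert (0 <= L ^ 2) by nra. nra.
Qed.

Lemma large_X_conditions K1 X delta T : 1 <= K1 -> (10000000000 * K1 ^ 4) ^ 40 <= X ->
  Rpower X (- (1/10)) <= delta -> 1 <= T -> T ^ 2 <= 4 * X ->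
  let B := delta ^ 2 * X / (16 * K1 ^ 2) in
  6 * T <= B /\ 9216 * ln X * (T + 1) <= B /\ 1152 * ln X ^ 2 * (T + 1) * T ^ 2 <= B ^ 2.
Proof.
  intros HK1 HX Hdel HT HT2.
  assert (Hs0 : 10000000000 <= 10000000000 * K1 ^ 4)
    by (assert (1 <= K1 ^ 4) by (apply pow_R1_Rle; lra); lra).
  assert (HX1 : 1 <= X)
    by (apply Rle_trans with ((10000000000 * K1 ^ 4) ^ 40); [apply pow_R1_Rle|]; lra).
  pose proof (root40_ge X (10000000000 * K1 ^ 4) ltac:(lra) HX) as Hss0.
  pose proof (root40_pow40 X ltac:(lra)) as HsX. pose proof (ln_le_root40 X ltac:(lra)) as HLs.
  rewrite Rpower_neg_tenth in Hdel. set (s := Rpower X (1/40)) in *.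
  assert (Hs : 0 < s) by apply exp_pos.
  assert (Hds : 1 <= delta * s ^ 4).
  { apply (Rmult_le_compat_r (s ^ 4)) in Hdel; [|apply pow_le; lra].
    rewrite Rinv_l in Hdel; [lra|apply pow_nonzero; lra]. }
  assert (HT2s : T ^ 2 <= 4 * s ^ 40) by (rewrite HsX; lra).
  assert (HL : 0 <= ln X <= 40 * s) by (split; [rewrite <- ln_1; apply ln_le|]; lra).
  destruct (root40_scale_conditions K1 s delta T (ln X) HK1 Hss0 Hds HT HT2s HL) as [H1 [H2 H3]].
  rewrite HsX in H1, H2, H3. auto.
Qed.

Theorem lemma5p4 (w : R -> R)
  (w_smooth : forall (n : nat) (x : R), ex_derive (Derive_n w n) x)
  (w_range : forall x, 0 <= w x <= 1)
  (w_supp : forall x, 1 < Rabs x -> w x = 0)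
  (w_half : forall x, Rabs x <= 1/2 -> 1/2 <= w x)
  (w_decay : exists C : R, forall t : R, what_abs w t <= C * exp (- sqrt (Rabs t))) :
  exists X0 C1 C2 : R,
    forall X delta theta : R,
      X0 <= X ->
      Rpower X (- (1/10)) <= delta ->
      delta * X <= ghat_abs w X theta ->
      exists q : nat, (1 <= q)%nat /\
        INR q <= C1 * (ln X) ^ 2 / delta ^ 4 /\
        distZ (INR q * theta) <= C2 * (ln X) ^ 2 / delta ^ 4 / X.
Proof.
  destruct (smooth_compact_support_lipschitz w w_smooth w_supp) as [K [HK w_lip]].
  set (K1 := 1 + 6 * K). assert (HK1 : 1 <= K1) by (unfold K1; lra).
  exists ((10000000000 * K1 ^ 4) ^ 40), (393216 * K1 ^ 4), (9437184 * K1 ^ 4).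
  intros X delta theta HX Hdel Hg.
  assert (HK4 : 1 <= K1 ^ 4) by (apply pow_R1_Rle; lra).
  assert (HX4 : 4 <= X).
  { apply Rle_trans with (10000000000 * K1 ^ 4); [lra|]. eapply Rle_trans; [|apply HX].
    rewrite <- pow_1 at 1. apply Rle_pow; [lra|lia]. }
  assert (Hd : 0 < delta) by (eapply Rlt_le_trans; [apply exp_pos|apply Hdel]).
  set (L := ln X).
  assert (HL : 1 <= L) by (unfold L; rewrite <- (ln_exp 1); apply ln_le; [apply exp_pos|];
                            pose proof exp_le_3; lra).
  destruct (large_partial_sum w K X w_range w_supp w_lip HX4 theta delta Hd Hg)
    as [Hd8 [T [HT1 [HT2 HB]]]]. fold K1 in Hd8, HB.
  assert (HTr : 1 <= INR T) by (apply (le_INR 1); auto).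
  assert (HlnT : ln (INR T) <= L) by (apply ln_le; nra).
  destruct (large_X_conditions K1 X delta (INR T) HK1 HX Hdel HTr HT2) as [Hc1 [Hc2 Hc3]].
  destruct (quad_cos_rsum_period theta T _ L HT1 HL HlnT HB Hc1 Hc2 Hc3) as [q [a [Hq1 [Hq Hqa]]]].
  destruct (period_bounds_in_delta K1 L delta X T (INR q) _ HK1 HL ltac:(lra) ltac:(lra)
              HTr HT2 (Rabs_pos _) Hq Hqa) as [Hq2 Hdist].
  exists (2 * q)%nat. rewrite mult_INR. replace (INR 2) with 2 by (simpl; ring).
  repeat split; [lia|lra|].
  eapply Rle_trans; [apply (distZ_le _ a)|].
  replace (2 * INR q * theta) with (INR q * (2 * theta)) by ring. exact Hdist.
Qed.
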